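(* Let $n\ge 1$, $a<b$, and let $f,g:[a,b]\to\mathbb{R}$ be $n$-times differentiable on $[a,b]$ with $g^{(n)}(a)\neq g^{(n)}(b)$. Then there exists $\eta\in(a,b)$ such that $$f(a)-T_n(f,\eta)(a)=\frac{f^{(n)}(b)-f^{(n)}(a)}{g^{(n)}(b)-g^{(n)}(a)}\cdot\bigl[g(a)-T_n(g,\eta)(a)\bigr].$$
   Context: $n$-times differentiable on $[a,b]$ means $n$-times differentiable on $(a,b)$ with the corresponding one-sided derivatives existing at the endpoints. $T_n(h,x_0)(x)=\sum_{k=0}^n \frac{h^{(k)}(x_0)}{k!}(x-x_0)^k$ denotes the $n$-th Taylor polynomial of $h$ at $x_0$, evaluated at $x$. *)

From Stdlib Require Import Reals Factorial.
From Coquelicot Require Import Coquelicot.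
Open Scope R_scope.

(* At interior points this is the usual two-sided derivative; at a (resp. b)
   it is the right (resp. left) one-sided derivative. *)
Definition derive_within (a b : R) (h : R -> R) (x l : R) : Prop :=
  filterlim (fun y => (h y - h x) / (y - x))
    (within (fun y => a <= y <= b /\ y <> x) (locally x)) (locally l).

Definition nth_derivs_on (n : nat) (a b : R) (f : R -> R) (F : nat -> R -> R)
  : Prop :=
  (forall x, a <= x <= b -> F 0%nat x = f x) /\
  (forall k x, (k < n)%nat -> a <= x <= b -> derive_within a b (F k) x (F (S k) x)).

Definition taylor (n : nat) (F : nat -> R -> R) (x0 x : R) : R :=
  sum_f_R0 (fun k => F k x0 / INR (Factorial.fact k) * (x - x0) ^ k) n.

From Stdlib Require Import Reals Factorial Lra Lia Classical.
From Coquelicot Require Import Coquelicot.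
Open Scope R_scope.

(* Put U := F - c G with c the ratio in the statement, so that U^(n)(a) = U^(n)(b), and
   m := n - 1.  Writing phi(t) := U(a) - T_m(U,t)(a) and psi(t) := (t - a)^n, the remainder
   U(a) - T_n(U,t)(a) vanishes exactly where phi' psi = phi psi'.  A Peano-type estimate gives
   phi / psi -> L := (-1)^n U^(n)(a) / n! as t -> a+, and U^(n)(a) = U^(n)(b) says that
   phi'(b) = L psi'(b).  A Flett-type argument then locates an interior critical point of
   phi / psi: either phi / psi is constant, or it exceeds (or falls below) L somewhere, and an
   extremum of phi / psi on [a', b] with a' close to a cannot occur at b. *)

Section FilterlimArith.
Context {T : Type} {F : (T -> Prop) -> Prop} {FF : Filter F}.

Lemma filterlim_Rplus {f g : T -> R} {x y} :
  filterlim f F (locally x) -> filterlim g F (locally y) ->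
  filterlim (fun t => f t + g t) F (locally (x + y)).
Proof. intros Hf Hg; exact (filterlim_comp_2 f g Rplus Hf Hg (filterlim_plus x y)). Qed.

Lemma filterlim_Rmult {f g : T -> R} {x y} :
  filterlim f F (locally x) -> filterlim g F (locally y) ->
  filterlim (fun t => f t * g t) F (locally (x * y)).
Proof. intros Hf Hg; exact (filterlim_comp_2 f g Rmult Hf Hg (filterlim_mult x y)). Qed.

Lemma filterlim_Rinv {f : T -> R} {x} :
  x <> 0 -> filterlim f F (locally x) -> filterlim (fun t => / f t) F (locally (/ x)).
Proof.
  intros Hx Hf; apply (filterlim_comp _ _ _ f Rinv F (locally x) (locally (/ x)) Hf).
  apply (filterlim_Rbar_inv (Finite x)); intro E; apply Hx; now injection E.
Qed.

End FilterlimArith.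

Lemma pow_pred_mul_le m u v : 0 <= u <= v -> INR m * (u ^ pred m * u) <= INR m * v ^ m.
Proof.
  intro Huv; destruct m as [|m]; [simpl; lra|].
  apply Rmult_le_compat_l; [apply pos_INR|]; simpl pred; rewrite Rmult_comm.
  apply (pow_incr u v (S m)); lra.
Qed.

Lemma INR_fact_succ m : INR (fact (S m)) = INR (S m) * INR (fact m).
Proof. now rewrite fact_simpl, mult_INR. Qed.

Lemma Rabs_pow_sub_rev x y k : x <= y -> Rabs ((x - y) ^ k) = (y - x) ^ k.
Proof. intro; rewrite <- RPow_abs, Rabs_left1 by lra; f_equal; ring. Qed.

Lemma pow_sub_rev x y k : (x - y) ^ k = (-1) ^ k * (y - x) ^ k.
Proof. rewrite <- Rpow_mult_distr; f_equal; ring. Qed.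

Definition punctured_Icc (a b x : R) := within (fun y => a <= y <= b /\ y <> x) (locally x).

Definition continuous_within (a b : R) (h : R -> R) (x : R) : Prop :=
  filterlim h (within (fun y => a <= y <= b) (locally x)) (locally (h x)).

Lemma derive_within_ext {a b f g x l l'} :
  derive_within a b f x l -> (forall y, f y = g y) -> l = l' -> derive_within a b g x l'.
Proof.
  intros H Hfg <-; eapply filterlim_ext; [|exact H].
  intro y; simpl; rewrite !Hfg; reflexivity.
Qed.

Lemma derive_within_const a b c x : derive_within a b (fun _ => c) x 0.
Proof.
  eapply filterlim_ext; [|exact (filterlim_const (F := punctured_Icc a b x) 0)].
  intro y; simpl; unfold Rdiv; ring.
Qed.

Lemma derive_within_id a b x : derive_within a b (fun y => y) x 1.
Proof.
  eapply filterlim_ext_loc; [|exact (filterlim_const (F := punctured_Icc a b x) 1)].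
  exists (mkposreal _ Rlt_0_1); intros y _ [_ Hy]; simpl; field; lra.
Qed.

Lemma derive_within_plus {a b f g x lf lg} :
  derive_within a b f x lf -> derive_within a b g x lg ->
  derive_within a b (fun y => f y + g y) x (lf + lg).
Proof.
  intros Hf Hg; eapply filterlim_ext; [|exact (filterlim_Rplus Hf Hg)].
  intro y; simpl; unfold Rdiv; ring.
Qed.

Lemma derive_within_filterlim a b h x l :
  derive_within a b h x l -> filterlim h (punctured_Icc a b x) (locally (h x)).
Proof.
  intro Hd.
  assert (Hid : filterlim (fun y => y - x) (punctured_Icc a b x) (locally (x - x))).
  { apply filterlim_Rplus; [|apply filterlim_const].
    apply (filterlim_filter_le_1 (F := locally x)); [apply filter_le_within|apply filterlim_id]. }
  pose proof (filterlim_Rplus (filterlim_const (h x)) (filterlim_Rmult Hd Hid)) as H.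
  replace (h x + l * (x - x)) with (h x) in H by ring.
  eapply filterlim_ext_loc; [|exact H].
  exists (mkposreal _ Rlt_0_1); intros y _ [_ Hy]; simpl; field; lra.
Qed.

Lemma derive_within_continuous {a b h x l} :
  derive_within a b h x l -> continuous_within a b h x.
Proof.
  intros Hd P HP.
  destruct (derive_within_filterlim a b h x l Hd P HP) as [d Hdy].
  exists d; intros y Hy Hab.
  destruct (Req_dec y x) as [->|Hne]; [exact (locally_singleton _ _ HP)|auto].
Qed.

Lemma continuous_within_div {a b f g x} :
  continuous_within a b f x -> continuous_within a b g x -> g x <> 0 ->
  continuous_within a b (fun y => f y / g y) x.
Proof. intros Hf Hg Hgx; exact (filterlim_Rmult Hf (filterlim_Rinv Hgx Hg)). Qed.

Lemma derive_within_mult {a b f g x lf lg} :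
  derive_within a b f x lf -> derive_within a b g x lg ->
  derive_within a b (fun y => f y * g y) x (lf * g x + f x * lg).
Proof.
  intros Hf Hg.
  pose proof (filterlim_Rmult Hf (derive_within_filterlim a b g x lg Hg)) as H1.
  pose proof (filterlim_Rmult (filterlim_const (f x)) Hg) as H2.
  eapply filterlim_ext; [|exact (filterlim_Rplus H1 H2)].
  intro y; simpl; unfold Rdiv; ring.
Qed.

Lemma derive_within_scal {a b} c {f x l} :
  derive_within a b f x l -> derive_within a b (fun y => c * f y) x (c * l).
Proof.
  intro H; apply (derive_within_ext (derive_within_mult (derive_within_const a b c x) H));
    [reflexivity|ring].
Qed.

Lemma derive_within_minus {a b f g x lf lg} :
  derive_within a b f x lf -> derive_within a b g x lg ->
  derive_within a b (fun y => f y - g y) x (lf - lg).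
Proof.
  intros Hf Hg.
  apply (derive_within_ext (derive_within_plus Hf (derive_within_scal (-1) Hg)));
    [intro y; ring|ring].
Qed.

Lemma derive_within_pow_sub a b c x k :
  derive_within a b (fun y => (y - c) ^ k) x (INR k * (x - c) ^ pred k).
Proof.
  induction k as [|k IH].
  - apply (derive_within_ext (derive_within_const a b 1 x)); [reflexivity|simpl; ring].
  - pose proof (derive_within_mult
      (derive_within_minus (derive_within_id a b x) (derive_within_const a b c x)) IH) as H.
    apply (derive_within_ext H); [reflexivity|].
    rewrite S_INR; destruct k; simpl; ring.
Qed.

Lemma derive_within_pow_sub_rev a b c x k :
  derive_within a b (fun y => (c - y) ^ k) x (- INR k * (c - x) ^ pred k).
Proof.
  apply (derive_within_ext (derive_within_scal ((-1) ^ k) (derive_within_pow_sub a b c x k))).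
  - intro y; symmetry; apply pow_sub_rev.
  - destruct k; simpl; [ring|]; rewrite (pow_sub_rev c x k); ring.
Qed.

Lemma derive_within_approx {a b h x l} eps :
  0 < eps -> derive_within a b h x l -> exists d, 0 < d /\
  forall y, a <= y <= b -> Rabs (y - x) < d -> Rabs (h y - h x - l * (y - x)) <= eps * Rabs (y - x).
Proof.
  intros Heps Hd.
  destruct (Hd (ball l eps) (locally_ball l (mkposreal _ Heps))) as [d Hdy].
  exists d; split; [apply cond_pos|]; intros y Hy Hyx.
  destruct (Req_dec y x) as [->|Hne];
    [replace (h x - h x - l * (x - x)) with 0 by ring; rewrite Rminus_diag, Rabs_R0; lra|].
  specialize (Hdy y Hyx (conj Hy Hne)); change (Rabs ((h y - h x) / (y - x) - l) < eps) in Hdy.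
  replace (h y - h x - l * (y - x)) with (((h y - h x) / (y - x) - l) * (y - x)) by (field; lra).
  rewrite Rabs_mult; apply Rmult_le_compat_r; [apply Rabs_pos|lra].
Qed.

Lemma derive_within_at_left a b h x l :
  a < x <= b -> derive_within a b h x l ->
  filterlim (fun y => (h y - h x) / (y - x)) (at_left x) (locally l).
Proof.
  intros Hx Hd; apply (filterlim_filter_le_1 (F := punctured_Icc a b x)); [|exact Hd].
  intros P HP; unfold punctured_Icc, within in HP.
  refine (filter_imp _ _ _ (filter_and _ _ HP (open_gt a x (proj1 Hx)))).
  intros y [HPy Hay] Hyx; apply HPy; split; [lra|exact (Rlt_not_eq _ _ Hyx)].
Qed.

Lemma derive_within_at_right a b h x l :
  a <= x < b -> derive_within a b h x l ->
  filterlim (fun y => (h y - h x) / (y - x)) (at_right x) (locally l).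
Proof.
  intros Hx Hd; apply (filterlim_filter_le_1 (F := punctured_Icc a b x)); [|exact Hd].
  intros P HP; unfold punctured_Icc, within in HP.
  refine (filter_imp _ _ _ (filter_and _ _ HP (open_lt b x (proj2 Hx)))).
  intros y [HPy Hyb] Hxy; apply HPy; split; [lra|exact (Rgt_not_eq _ _ Hxy)].
Qed.

Lemma derive_within_ge0_at_left_max a b h x x1 l :
  a <= x1 < x -> x <= b -> derive_within a b h x l ->
  (forall y, x1 <= y <= x -> h y <= h x) -> 0 <= l.
Proof.
  intros Hx1 Hxb Hd Hmax.
  assert (Hx : a < x <= b) by lra.
  refine (closed_filterlim_loc _ (fun u => 0 <= u) l
    (derive_within_at_left a b h x l Hx Hd) _ (closed_ge 0)).
  unfold at_left, within; refine (filter_imp _ _ _ (open_gt x1 x (proj2 Hx1))).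
  intros y Hy Hyx; cbv beta.
  replace ((h y - h x) / (y - x)) with ((h x - h y) / (x - y)) by (field; lra).
  apply Rdiv_le_0_compat; [apply Rge_le, Rge_minus, Rle_ge, Hmax|]; lra.
Qed.

Lemma derive_within_le0_at_right_max a b h x x2 l :
  a <= x -> x < x2 <= b -> derive_within a b h x l ->
  (forall y, x <= y <= x2 -> h y <= h x) -> l <= 0.
Proof.
  intros Hax Hx2 Hd Hmax.
  assert (Hx : a <= x < b) by lra.
  refine (closed_filterlim_loc _ (fun u => u <= 0) l
    (derive_within_at_right a b h x l Hx Hd) _ (closed_le 0)).
  unfold at_right, within; refine (filter_imp _ _ _ (open_lt x2 x (proj1 Hx2))).
  intros y Hy Hxy; cbv beta.
  replace ((h y - h x) / (y - x)) with (- ((h x - h y) / (y - x))) by (field; lra).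
  enough (0 <= (h x - h y) / (y - x)) by lra.
  apply Rdiv_le_0_compat; [apply Rge_le, Rge_minus, Rle_ge, Hmax|]; lra.
Qed.

Lemma derive_within_eq0_at_max a b h x x1 x2 l :
  a <= x1 < x -> x < x2 <= b -> derive_within a b h x l ->
  (forall y, x1 <= y <= x2 -> h y <= h x) -> l = 0.
Proof.
  intros Hx1 Hx2 Hd Hmax; apply Rle_antisym.
  - apply (derive_within_le0_at_right_max a b h x x2); auto; [lra|].
    intros y Hy; apply Hmax; lra.
  - apply (derive_within_ge0_at_left_max a b h x x1); auto; [lra|].
    intros y Hy; apply Hmax; lra.
Qed.

Definition clamp (a b y : R) : R := Rmax a (Rmin b y).

Lemma clamp_id a b y : a <= y <= b -> clamp a b y = y.
Proof. intros; unfold clamp, Rmax, Rmin; repeat destruct Rle_dec; lra. Qed.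

Lemma clamp_in a b y : a <= b -> a <= clamp a b y <= b.
Proof. intros; unfold clamp, Rmax, Rmin; repeat destruct Rle_dec; lra. Qed.

Lemma clamp_dist_le a b y z : a <= b -> Rabs (clamp a b y - clamp a b z) <= Rabs (y - z).
Proof.
  intros; unfold clamp, Rmax, Rmin, Rabs.
  repeat destruct Rle_dec; repeat destruct Rcase_abs; lra.
Qed.

Lemma filterlim_clamp a b z :
  a <= b ->
  filterlim (clamp a b) (locally z) (within (fun y => a <= y <= b) (locally (clamp a b z))).
Proof.
  intros Hab P [eps HP]; exists eps; intros y Hy.
  apply HP; [|exact (clamp_in a b y Hab)].
  exact (Rle_lt_trans _ _ _ (clamp_dist_le a b y z Hab) Hy).
Qed.

(* Stdlib's extreme value theorem wants two-sided continuity, hence the clamped extension. *)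
Lemma continuous_within_attains_max a b h x1 x2 :
  a <= x1 <= x2 -> x2 <= b -> (forall x, x1 <= x <= x2 -> continuous_within a b h x) ->
  exists M, x1 <= M <= x2 /\ forall y, x1 <= y <= x2 -> h y <= h M.
Proof.
  intros Hx1 Hx2 Hc.
  assert (Hcl : forall y, x1 <= y <= x2 -> h (clamp x1 x2 y) = h y)
    by (intros; rewrite clamp_id; auto).
  destruct (continuity_ab_maj (fun y => h (clamp x1 x2 y)) x1 x2 (proj2 Hx1)) as [M [HM HMin]].
  { intros z _; apply continuity_pt_filterlim.
    apply (filterlim_comp _ _ _ _ _ _ _ _ (filterlim_clamp x1 x2 z (proj2 Hx1))).
    pose proof (clamp_in x1 x2 z (proj2 Hx1)).
    intros P HP; specialize (Hc _ H P HP); unfold filtermap, within in *.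
    refine (filter_imp _ _ _ Hc); intros y HPy Hy; apply HPy; lra. }
  exists M; split; [exact HMin|].
  intros y Hy; rewrite <- (Hcl y Hy), <- (Hcl M HMin); exact (HM y Hy).
Qed.

Lemma rolle_within a b h h' x1 x2 :
  a <= x1 < x2 -> x2 <= b -> (forall y, a <= y <= b -> derive_within a b h y (h' y)) ->
  h x1 = h x2 -> exists y, x1 < y < x2 /\ h' y = 0.
Proof.
  intros Hx1 Hx2 Hd Heq.
  assert (Hd_opp : forall y, a <= y <= b -> derive_within a b (fun y => - h y) y (- h' y)).
  { intros y Hy; apply (derive_within_ext (derive_within_scal (-1) (Hd y Hy)));
      [intro; ring|ring]. }
  destruct (continuous_within_attains_max a b h x1 x2) as [M [HM Hmax]]; try lra.
  { intros x Hx; exact (derive_within_continuous (Hd x ltac:(lra))). }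
  destruct (continuous_within_attains_max a b (fun y => - h y) x1 x2) as [m [Hm Hmin]]; try lra.
  { intros x Hx; exact (derive_within_continuous (Hd_opp x ltac:(lra))). }
  destruct (Rlt_or_le (h x1) (h M)) as [HhM|HhM].
  - assert (M <> x1) by (intros ->; lra). assert (M <> x2) by (intros ->; lra).
    exists M; split; [lra|].
    apply (derive_within_eq0_at_max a b h M x1 x2); [lra|lra|apply Hd; lra|exact Hmax].
  - destruct (Rlt_or_le (h m) (h x1)) as [Hhm|Hhm].
    + assert (m <> x1) by (intros ->; lra). assert (m <> x2) by (intros ->; lra).
      exists m; split; [lra|].
      enough (- h' m = 0) by lra.
      apply (derive_within_eq0_at_max a b (fun y => - h y) m x1 x2);
        [lra|lra|apply Hd_opp; lra|exact Hmin].
    + exists ((x1 + x2) / 2); split; [lra|].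
      apply (derive_within_eq0_at_max a b h ((x1 + x2) / 2) x1 x2); [lra|lra|apply Hd; lra|].
      intros y Hy; pose proof (Hmax y Hy); pose proof (Hmin ((x1 + x2) / 2) ltac:(lra)); lra.
Qed.

Lemma mean_value_bound_within a b h h' x1 x2 K :
  a <= x1 < x2 -> x2 <= b -> (forall y, a <= y <= b -> derive_within a b h y (h' y)) ->
  (forall y, x1 < y < x2 -> Rabs (h' y) <= K) -> Rabs (h x2 - h x1) <= K * (x2 - x1).
Proof.
  intros Hx1 Hx2 Hd HK.
  set (s := (h x2 - h x1) / (x2 - x1)).
  destruct (rolle_within a b (fun y => h y - s * (y - x1)) (fun y => h' y - s) x1 x2)
    as [y [Hy Hy']]; auto.
  - intros y Hy; apply (derive_within_ext (derive_within_minus (Hd y Hy)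
      (derive_within_scal s (derive_within_pow_sub a b x1 y 1)))); [intro; simpl; ring|simpl; ring].
  - unfold s; field; lra.
  - replace (h x2 - h x1) with (h' y * (x2 - x1))
      by (unfold s in Hy'; field_simplify_eq in Hy'; lra).
    rewrite Rabs_mult, (Rabs_right (x2 - x1)) by lra.
    apply Rmult_le_compat_r; [lra|auto].
Qed.

Lemma filterlim_at_right_exists_lt (h : R -> R) a L y t0 :
  filterlim h (at_right a) (locally L) -> L < y -> a < t0 ->
  exists a', a < a' < t0 /\ h a' < y.
Proof.
  intros Hlim HL Ht0.
  assert (Heps : 0 < y - L) by lra.
  destruct (Hlim _ (locally_ball L (mkposreal _ Heps))) as [d Hd].
  assert (Hd' : 0 < Rmin d (t0 - a)) by (apply Rmin_glb_lt; [apply cond_pos|lra]).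
  pose proof (Rmin_l d (t0 - a)); pose proof (Rmin_r d (t0 - a)).
  set (a' := a + Rmin d (t0 - a) / 2).
  exists a'; split; [unfold a'; lra|].
  assert (Hball : Rabs (h a' - L) < y - L).
  { apply Hd; [|unfold a'; lra].
    change (Rabs (a' - a) < d); unfold a'; rewrite Rabs_right; lra. }
  apply Rabs_def2 in Hball; lra.
Qed.

Section CauchyFlett.
Variables (a b : R) (psi psi' : R -> R).
Hypothesis Hab : a < b.
Hypothesis Hpsi : forall x, a <= x <= b -> derive_within a b psi x (psi' x).
Hypothesis Hpsi_pos : forall x, a < x <= b -> 0 < psi x.
Hypothesis Hpsi'b : 0 < psi' b.

(* Maximise phi / psi on [a', b], with a' so close to a that phi / psi is below its value at
   t0 there.  The maximiser M is interior: at b, phi - K psi (K the maximum) would have slope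
   (L - K) psi'(b) < 0. *)
Lemma cauchy_flett_above (phi phi' : R -> R) (L t0 : R) :
  (forall x, a <= x <= b -> derive_within a b phi x (phi' x)) ->
  filterlim (fun t => phi t / psi t) (at_right a) (locally L) -> phi' b = L * psi' b ->
  a < t0 <= b -> L < phi t0 / psi t0 ->
  exists eta, a < eta < b /\ phi eta * psi' eta = phi' eta * psi eta.
Proof.
  intros Hphi Hlim Hb Ht0 HL.
  set (h := fun t => phi t / psi t).
  destruct (filterlim_at_right_exists_lt h a L (h t0) t0 Hlim HL (proj1 Ht0)) as [a' [Ha' Hha']].
  assert (Hh : forall x, a' <= x <= b -> continuous_within a b h x).
  { intros x Hx; apply continuous_within_div;
      [apply (derive_within_continuous (Hphi x ltac:(lra)))
      |apply (derive_within_continuous (Hpsi x ltac:(lra)))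
      |apply Rgt_not_eq, Hpsi_pos; lra]. }
  destruct (continuous_within_attains_max a b h a' b ltac:(lra) (Rle_refl b) Hh) as [M [HM Hmax]].
  assert (HtM : h t0 <= h M) by (apply Hmax; lra).
  assert (HaM : a' < M) by (destruct (Req_dec M a') as [->|]; lra).
  set (K := h M).
  assert (HphiM : phi M = K * psi M).
  { unfold K, h; field; apply Rgt_not_eq, Hpsi_pos; lra. }
  assert (Hgap : forall y, a' <= y <= b -> phi y - K * psi y <= phi M - K * psi M).
  { intros y Hy; rewrite HphiM, Rminus_diag.
    assert (Hpy : 0 < psi y) by (apply Hpsi_pos; lra).
    replace (phi y - K * psi y) with ((h y - K) * psi y) by (unfold h; field; lra).
    assert (h y <= K) by (apply Hmax; lra).
    apply Rmult_le_0_r; lra. }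
  assert (Hgap' : forall y, a <= y <= b ->
           derive_within a b (fun y => phi y - K * psi y) y (phi' y - K * psi' y)).
  { intros y Hy; exact (derive_within_minus (Hphi y Hy)
      (derive_within_scal K (Hpsi y Hy))). }
  destruct (Rlt_or_le M b) as [HMb|HMb].
  - exists M; split; [lra|].
    assert (Hcrit : phi' M - K * psi' M = 0)
      by (apply (derive_within_eq0_at_max a b (fun y => phi y - K * psi y) M a' b);
          [lra|lra|apply Hgap'; lra|exact Hgap]).
    rewrite HphiM; replace (phi' M) with (K * psi' M) by lra; ring.
  - exfalso; assert (M = b) as -> by lra.
    assert (Hslope : 0 <= phi' b - K * psi' b)
      by (apply (derive_within_ge0_at_left_max a b (fun y => phi y - K * psi y) b a');
          [lra|lra|apply Hgap'; lra|exact Hgap]).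
    assert (0 < (K - L) * psi' b) by (apply Rmult_lt_0_compat; unfold K, h in *; lra).
    rewrite Hb in Hslope; lra.
Qed.

Lemma cauchy_flett (phi phi' : R -> R) (L : R) :
  (forall x, a <= x <= b -> derive_within a b phi x (phi' x)) ->
  filterlim (fun t => phi t / psi t) (at_right a) (locally L) -> phi' b = L * psi' b ->
  exists eta, a < eta < b /\ phi eta * psi' eta = phi' eta * psi eta.
Proof.
  intros Hphi Hlim Hb.
  destruct (classic (exists t0, a < t0 <= b /\ L < phi t0 / psi t0)) as [[t0 [Ht0 HL]]|Hnot_above].
  { exact (cauchy_flett_above phi phi' L t0 Hphi Hlim Hb Ht0 HL). }
  destruct (classic (exists t0, a < t0 <= b /\ phi t0 / psi t0 < L)) as [[t0 [Ht0 HL]]|Hnot_below].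
  - destruct (cauchy_flett_above (fun t => - phi t) (fun t => - phi' t) (- L) t0)
      as [eta [Heta Heq]].
    + intros x Hx; apply (derive_within_ext (derive_within_scal (-1) (Hphi x Hx)));
        [intro; ring|ring].
    + replace (- L) with (-1 * L) by ring.
      apply (filterlim_ext (fun t => -1 * (phi t / psi t))); [intro; unfold Rdiv; ring|].
      exact (filterlim_Rmult (filterlim_const (-1)) Hlim).
    + rewrite Hb; ring.
    + exact Ht0.
    + replace (- phi t0 / psi t0) with (- (phi t0 / psi t0)) by (unfold Rdiv; ring); lra.
    + exists eta; split; [exact Heta|lra].
  - set (eta := (a + b) / 2).
    assert (Hprop : forall t, a < t <= b -> phi t - L * psi t = 0).
    { intros t Ht.
      assert (Hpt : 0 < psi t) by (apply Hpsi_pos; exact Ht).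
      destruct (Rtotal_order (phi t / psi t) L) as [Hlt|[Heq|Hgt]].
      - exfalso; apply Hnot_below; exists t; auto.
      - rewrite <- Heq; field; lra.
      - exfalso; apply Hnot_above; exists t; auto. }
    assert (Hcrit : phi' eta - L * psi' eta = 0).
    { apply (derive_within_eq0_at_max a b (fun y => phi y - L * psi y) eta ((a + eta) / 2) b);
        [unfold eta; lra|unfold eta; lra| |].
      - exact (derive_within_minus (Hphi eta ltac:(unfold eta; lra))
          (derive_within_scal L (Hpsi eta ltac:(unfold eta; lra)))).
      - intros y Hy; rewrite !Hprop by (unfold eta in *; lra); lra. }
    exists eta; split; [unfold eta; lra|].
    assert (Heta : phi eta = L * psi eta) by (apply Rminus_diag_uniq, Hprop; unfold eta; lra).
    rewrite Heta; replace (phi' eta) with (L * psi' eta) by lra; ring.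
Qed.

End CauchyFlett.

Lemma taylor_succ m U t x :
  taylor (S m) U t x = taylor m U t x + U (S m) t / INR (fact (S m)) * (x - t) ^ S m.
Proof. reflexivity. Qed.

Lemma taylor_at_center m U x : taylor m U x x = U 0%nat x.
Proof.
  induction m as [|m IH]; [unfold taylor; simpl; field|].
  rewrite taylor_succ, IH, Rminus_diag; simpl; ring.
Qed.

Lemma taylor_lin m (F G : nat -> R -> R) c t x :
  taylor m (fun k y => F k y - c * G k y) t x = taylor m F t x - c * taylor m G t x.
Proof.
  induction m as [|m IH]; [unfold taylor; simpl; field|].
  rewrite !taylor_succ, IH; field; apply INR_fact_neq_0.
Qed.

Lemma remainder_slope_le m e r a s t :
  0 <= e -> a <= s <= t -> Rabs r <= e * (s - a) ->
  Rabs (- (INR m / INR (fact m)) * ((a - s) ^ pred m * r))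
    <= INR m / INR (fact m) * e * (t - a) ^ m.
Proof.
  intros He Hs Hr.
  assert (Hk : 0 <= INR m / INR (fact m))
    by (apply Rdiv_le_0_compat; [apply pos_INR|apply INR_fact_lt_0]).
  rewrite Rabs_mult, Rabs_Ropp, Rabs_mult, Rabs_pow_sub_rev, (Rabs_right (INR m / _)) by lra.
  apply Rle_trans with (INR m / INR (fact m) * ((s - a) ^ pred m * (e * (s - a)))).
  { apply Rmult_le_compat_l; [exact Hk|].
    apply Rmult_le_compat_l; [apply pow_le; lra|exact Hr]. }
  replace (INR m / INR (fact m) * ((s - a) ^ pred m * (e * (s - a))))
    with (e / INR (fact m) * (INR m * ((s - a) ^ pred m * (s - a))))
    by (field; apply INR_fact_neq_0).
  replace (INR m / INR (fact m) * e * (t - a) ^ m)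
    with (e / INR (fact m) * (INR m * (t - a) ^ m)) by (field; apply INR_fact_neq_0).
  apply Rmult_le_compat_l; [apply Rdiv_le_0_compat; [lra|apply INR_fact_lt_0]|].
  apply pow_pred_mul_le; lra.
Qed.

Section TaylorCenter.
Variables (a b : R) (n : nat) (U : nat -> R -> R).
Hypothesis HU : forall k x, (k < n)%nat -> a <= x <= b -> derive_within a b (U k) x (U (S k) x).

(* Telescoping: only the top-order term survives differentiation in the center. *)
Lemma derive_within_taylor_center m x t :
  (m < n)%nat -> a <= t <= b ->
  derive_within a b (fun t => taylor m U t x) t (U (S m) t / INR (fact m) * (x - t) ^ m).
Proof.
  intros Hm Ht; induction m as [|m IH].
  - apply (derive_within_ext (HU 0 t Hm Ht)); [intro; unfold taylor; simpl|simpl]; field.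
  - pose proof (derive_within_plus (IH ltac:(lia))
      (derive_within_mult
        (derive_within_scal (/ INR (fact (S m))) (HU (S m) t Hm Ht))
        (derive_within_pow_sub_rev a b x t (S m)))) as H.
    apply (derive_within_ext H); [intro y; rewrite taylor_succ; unfold Rdiv; ring|].
    rewrite INR_fact_succ, S_INR; simpl pred.
    field; split; [apply INR_fact_neq_0|pose proof (pos_INR m); lra].
Qed.

Let linear_error m y := U m y - U m a - U (S m) a * (y - a).

(* The correction term cancels U (S m) y, which is not controlled near a, from the derivative;
   what is left only involves the linearisation error of U m at a. *)
Let corrected_remainder m y :=
  U 0%nat a - taylor m U y a - U (S m) a / INR (fact (S m)) * (a - y) ^ S m
  + (a - y) ^ m / INR (fact m) * linear_error m y.

Lemma derive_within_corrected_remainder m y :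
  (m < n)%nat -> a <= y <= b ->
  derive_within a b (corrected_remainder m) y
    (- (INR m / INR (fact m)) * ((a - y) ^ pred m * linear_error m y)).
Proof.
  intros Hm Hy.
  pose proof (derive_within_minus
    (derive_within_minus (derive_within_const a b (U 0%nat a) y)
       (derive_within_taylor_center m a y Hm Hy))
    (derive_within_scal (U (S m) a / INR (fact (S m)))
       (derive_within_pow_sub_rev a b a y (S m)))) as Hrem.
  pose proof (derive_within_minus
    (derive_within_minus (HU m y Hm Hy) (derive_within_const a b (U m a) y))
    (derive_within_scal (U (S m) a) (derive_within_pow_sub a b a y 1))) as Hlin.
  pose proof (derive_within_plus Hrem (derive_within_mult
    (derive_within_scal (/ INR (fact m)) (derive_within_pow_sub_rev a b a y m)) Hlin)) as H.
  apply (derive_within_ext H);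
    [intro z; unfold corrected_remainder, linear_error; simpl; unfold Rdiv; ring|].
  unfold linear_error; rewrite INR_fact_succ, S_INR; simpl.
  field; split; [apply INR_fact_neq_0|pose proof (pos_INR m); lra].
Qed.

Lemma corrected_remainder_at_center m : corrected_remainder m a = 0.
Proof.
  unfold corrected_remainder, linear_error.
  rewrite taylor_at_center, !Rminus_diag; destruct m; simpl; ring.
Qed.

Lemma taylor_center_remainder_small m eps :
  (m < n)%nat -> a < b -> 0 < eps -> exists d, 0 < d /\ forall t, a < t < a + d -> t <= b ->
  Rabs (U 0%nat a - taylor m U t a - U (S m) a / INR (fact (S m)) * (a - t) ^ S m)
    <= eps * (t - a) ^ S m.
Proof.
  intros Hm Hab Heps.
  set (e := eps * INR (fact m) / INR (S m)).
  assert (He : 0 < e).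
  { apply Rdiv_lt_0_compat; [apply Rmult_lt_0_compat; [exact Heps|apply INR_fact_lt_0]|].
    apply lt_0_INR; lia. }
  destruct (derive_within_approx _ He (HU m a Hm ltac:(lra))) as [d [Hd Happrox]].
  exists d; split; [exact Hd|]; intros t Ht Htb.
  assert (Hlin : forall y, a <= y <= t -> Rabs (linear_error m y) <= e * (y - a)).
  { intros y Hy; rewrite <- (Rabs_right (y - a)) by lra.
    apply Happrox; [lra|rewrite Rabs_right; lra]. }
  pose proof (mean_value_bound_within a b (corrected_remainder m) _ a t _ ltac:(lra) Htb
    (fun y Hy => derive_within_corrected_remainder m y Hm Hy)
    (fun s Hs => remainder_slope_le m e _ a s t ltac:(lra) ltac:(lra) (Hlin s ltac:(lra))))
    as Hbound.
  rewrite corrected_remainder_at_center, Rminus_0_r in Hbound.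
  assert (Hcorr : Rabs ((a - t) ^ m / INR (fact m) * linear_error m t)
                  <= (t - a) ^ m / INR (fact m) * (e * (t - a))).
  { rewrite Rabs_mult; unfold Rdiv; rewrite Rabs_mult, Rabs_pow_sub_rev by lra.
    rewrite (Rabs_right (/ _)) by (apply Rle_ge, Rlt_le, Rinv_0_lt_compat, INR_fact_lt_0).
    apply Rmult_le_compat_l; [|apply Hlin; lra].
    apply Rmult_le_pos; [apply pow_le; lra|apply Rlt_le, Rinv_0_lt_compat, INR_fact_lt_0]. }
  replace (U 0%nat a - taylor m U t a - U (S m) a / INR (fact (S m)) * (a - t) ^ S m)
    with (corrected_remainder m t + - ((a - t) ^ m / INR (fact m) * linear_error m t))
    by (unfold corrected_remainder; ring).
  replace (eps * (t - a) ^ S m)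
    with (INR m / INR (fact m) * e * (t - a) ^ m * (t - a)
          + (t - a) ^ m / INR (fact m) * (e * (t - a)))
    by (unfold e; rewrite S_INR; simpl; field;
        split; first [apply INR_fact_neq_0|pose proof (pos_INR m); lra]).
  eapply Rle_trans; [apply Rabs_triang|]; rewrite Rabs_Ropp.
  apply Rplus_le_compat; assumption.
Qed.

Lemma taylor_center_remainder_limit m :
  (m < n)%nat -> a < b ->
  filterlim (fun t => (U 0%nat a - taylor m U t a) / (t - a) ^ S m) (at_right a)
    (locally ((-1) ^ S m * U (S m) a / INR (fact (S m)))).
Proof.
  intros Hm Hab; apply filterlim_locally; intro eps.
  destruct (taylor_center_remainder_small m (eps / 2) Hm Hab ltac:(pose proof (cond_pos eps); lra))
    as [d [Hd Hsmall]].
  assert (Hd' : 0 < Rmin d (b - a)) by (apply Rmin_glb_lt; lra).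
  pose proof (Rmin_l d (b - a)); pose proof (Rmin_r d (b - a)).
  exists (mkposreal _ Hd'); intros t Ht Hat.
  change (Rabs (t - a) < Rmin d (b - a)) in Ht; rewrite Rabs_right in Ht by lra.
  change (Rabs ((U 0%nat a - taylor m U t a) / (t - a) ^ S m
                - (-1) ^ S m * U (S m) a / INR (fact (S m))) < eps).
  assert (Hpos : 0 < (t - a) ^ S m) by (apply pow_lt; lra).
  specialize (Hsmall t ltac:(lra) ltac:(lra)).
  rewrite pow_sub_rev in Hsmall.
  replace ((U 0%nat a - taylor m U t a) / (t - a) ^ S m - (-1) ^ S m * U (S m) a / INR (fact (S m)))
    with ((U 0%nat a - taylor m U t a - U (S m) a / INR (fact (S m)) * ((-1) ^ S m * (t - a) ^ S m))
          / (t - a) ^ S m)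
    by (field; split; [apply INR_fact_neq_0|lra]).
  unfold Rdiv at 1; rewrite Rabs_mult, Rabs_inv, (Rabs_right ((t - a) ^ S m)) by lra.
  apply (Rmult_lt_reg_r ((t - a) ^ S m)); [exact Hpos|].
  rewrite Rmult_assoc, Rinv_l, Rmult_1_r by lra.
  apply (Rle_lt_trans _ (eps / 2 * (t - a) ^ S m)); [exact Hsmall|].
  apply Rmult_lt_compat_r; [exact Hpos|pose proof (cond_pos eps); lra].
Qed.

End TaylorCenter.

Lemma taylor_flett a b m (U : nat -> R -> R) :
  a < b -> (forall k x, (k < S m)%nat -> a <= x <= b -> derive_within a b (U k) x (U (S k) x)) ->
  U (S m) b = U (S m) a ->
  exists eta, a < eta < b /\ U 0%nat a = taylor (S m) U eta a.
Proof.
  intros Hab HU Hend.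
  pose proof (INR_fact_lt_0 m); pose proof (pos_INR m).
  set (psi t := (t - a) ^ S m); set (psi' t := INR (S m) * (t - a) ^ m).
  set (phi t := U 0%nat a - taylor m U t a).
  set (phi' t := - (U (S m) t / INR (fact m) * (a - t) ^ m)).
  assert (Hpsi : forall x, a <= x <= b -> derive_within a b psi x (psi' x))
    by (intros x _; exact (derive_within_pow_sub a b a x (S m))).
  assert (Hpsi_pos : forall x, a < x <= b -> 0 < psi x) by (intros x Hx; apply pow_lt; lra).
  assert (Hpsi'b : 0 < psi' b)
    by (apply Rmult_lt_0_compat; [apply lt_0_INR; lia|apply pow_lt; lra]).
  assert (Hphi : forall x, a <= x <= b -> derive_within a b phi x (phi' x)).
  { intros x Hx.
    pose proof (derive_within_taylor_center a b (S m) U HU m a x ltac:(lia) Hx) as Htaylor.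
    apply (derive_within_ext (derive_within_minus (derive_within_const a b (U 0%nat a) x) Htaylor));
      [reflexivity|unfold phi'; ring]. }
  destruct (cauchy_flett a b psi psi' Hab Hpsi Hpsi_pos Hpsi'b phi phi'
              ((-1) ^ S m * U (S m) a / INR (fact (S m))) Hphi
              (taylor_center_remainder_limit a b (S m) U HU m ltac:(lia) Hab))
    as [eta [Heta Hcross]].
  { unfold phi', psi'; rewrite Hend, pow_sub_rev, INR_fact_succ, S_INR; simpl; field; lra. }
  exists eta; split; [exact Heta|].
  assert (Hp : 0 < (eta - a) ^ m) by (apply pow_lt; lra).
  assert (Hrem : phi eta = U (S m) eta / INR (fact (S m)) * (a - eta) ^ S m).
  { apply (Rmult_eq_reg_r (psi' eta));
      [|apply Rgt_not_eq, Rmult_lt_0_compat; [apply lt_0_INR; lia|lra]].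
    rewrite Hcross; unfold phi', psi, psi'.
    rewrite pow_sub_rev, (pow_sub_rev a eta (S m)), INR_fact_succ, S_INR; simpl; field; lra. }
  rewrite taylor_succ; unfold phi in Hrem; lra.
Qed.

Theorem mainTheorem13 (n : nat) (a b : R) (f g : R -> R) (F G : nat -> R -> R) :
  (1 <= n)%nat -> a < b ->
  nth_derivs_on n a b f F -> nth_derivs_on n a b g G ->
  G n a <> G n b ->
  exists eta, a < eta < b /\
    f a - taylor n F eta a =
      (F n b - F n a) / (G n b - G n a) * (g a - taylor n G eta a).
Proof.
  intros Hn Hab [HF0 HF] [HG0 HG] HGn.
  destruct n as [|m]; [lia|].
  set (c := (F (S m) b - F (S m) a) / (G (S m) b - G (S m) a)).
  set (U := fun k y => F k y - c * G k y).
  assert (HU : forall k x, (k < S m)%nat -> a <= x <= b -> derive_within a b (U k) x (U (S k) x))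
    by (intros k x Hk Hx; apply derive_within_minus; [|apply derive_within_scal]; auto).
  assert (Hend : U (S m) b = U (S m) a) by (unfold U, c; field; lra).
  destruct (taylor_flett a b m U Hab HU Hend) as [eta [Heta Hflett]].
  exists eta; split; [exact Heta|].
  unfold U in Hflett; rewrite taylor_lin in Hflett.
  rewrite <- (HF0 a), <- (HG0 a) by lra; lra.
Qed.
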